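(* In the multi-server multi-function distributed computing model $\mathcal{T}(N,K,K_c,M,N_r)$ with cyclic placement of datasets, where $\Delta=K/N\in\mathbb{Z}^+$, suppose the user demands $K_c$ linearly separable functions $[F_1,\dots,F_{K_c}]^\intercal=\mathbf{\Gamma}\mathbf{W}$, with $\mathbf{W}=[W_1,\dots,W_K]^\intercal\in\mathbb{F}_q^{K}$ and known coefficient matrix $\mathbf{\Gamma}\in\mathbb{F}_q^{K_c\times K}$, and that the subfunctions $W_1,\dots,W_K$ are i.i.d. uniformly distributed over a field $\mathbb{F}_q$ of characteristic $q\ge2$. Then characteristic graph-based compression achieves $$R_{\rm ach}\le\begin{cases}\min\{K_c,\Delta\}\,N_r, & 1\le K_c\le \Delta N_r,\\ \min\{K_c,K\}, & \Delta N_r<K_c.\end{cases}$$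
   Context: Setting: $K$ datasets and $N$ non-cooperating servers $\Omega=[N]$; server $i$ stores datasets indexed by $\mathcal{Z}_i$ and holds subfunctions $X_i=\{W_k\}_{k\in\mathcal{Z}_i}$, $W_k=h_k(D_k)\in\mathbb{F}_q$. Cyclic placement with recovery threshold $N_r\in[N]$: $M=\Delta(N-N_r+1)$ and $\mathcal{Z}_i=\bigcup_{r=0}^{\Delta-1}\{\mathrm{mod}(i,N)+rN,\mathrm{mod}(i+1,N)+rN,\dots,\mathrm{mod}(i+N-N_r,N)+rN\}$ (with the convention $\mathrm{mod}(b,a)=a$ if $a$ divides $b$), so that any $N_r$ servers jointly store all datasets. The user must compute the demanded functions asymptotically losslessly from transmissions of $N_r$ servers. Each server $i$ builds the union characteristic graph $G^{\cup}_{X_i}$ (vertex set the support of $X_i$; $x_i^1,x_i^2$ adjacent iff for some realization of the other servers' data with positive probability some demanded function takes different values) and transmits an encoding of a valid coloring of its $n$-th OR power; the rate of server $i$ approaches the graph entropy $H_{G^{\cup}_{X_i}}(X_i)=\min I(X_i;U_i)$ over $U_i$ ranging over maximal independent sets containing $X_i$. $R_{\rm ach}$ denotes the sum of the rates (in $q$-ary symbols per subfunction symbol) of the $N_r$ transmitting servers. *)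

From HB Require Import structures.
From mathcomp Require Import all_boot all_order all_algebra.
From mathcomp Require Import all_classical all_reals all_analysis.
Set Implicit Arguments. Unset Strict Implicit. Unset Printing Implicit Defensive.
Import Order.TTheory GRing.Theory Num.Theory.
Local Open Scope ring_scope.

Section GraphEntropy.
Variables (R : realType) (V : finType).

Definition independent (adj : rel V) (A : {set V}) : bool :=
  [forall x in A, [forall y in A, ~~ adj x y]].

Definition max_independent (adj : rel V) (A : {set V}) : bool :=
  independent adj A &&
  [forall B : {set V}, (A \proper B) ==> ~~ independent adj B].

(* I(X;U) in nats, for X ~ pX and test channel W(u|x), U ranging over {set V}. *)
Definition mutual_info (pX : V -> R) (W : V -> {set V} -> R) : R :=
  \sum_(x : V) \sum_(A : {set V})
     (if pX x * W x A == 0 then 0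
      else pX x * W x A * ln (W x A / \sum_(y : V) pX y * W y A)).

Definition valid_test_channel (adj : rel V) (pX : V -> R) (W : V -> {set V} -> R) : Prop :=
  [/\ (forall x A, 0 <= W x A),
      (forall x, \sum_(A : {set V}) W x A = 1) &
      (forall x A, 0 < pX x -> 0 < W x A -> max_independent adj A /\ x \in A)].

Definition graph_entropy (adj : rel V) (pX : V -> R) : R :=
  inf [set r : R | exists W, valid_test_channel adj pX W /\ r = mutual_info pX W].

End GraphEntropy.

Section Model.
Variables (R : realType) (F : finFieldType) (N Kc Nr Delta : nat).
Local Notation K := (Delta * N)%N.

(* Cyclic placement, 0-based: server i (0..N-1) stores dataset k (0..K-1)
   iff (k - i) mod N lies in {0, ..., N - Nr}. *)
Definition cyclic_Z (i : 'I_N) : {set 'I_K} :=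
  [set k : 'I_K | ((k + N - i) %% N <= N - Nr)%N].

Definition server_data (Z : {set 'I_K}) := {ffun {k : 'I_K | k \in Z} -> F}.

Definition restrict (Z : {set 'I_K}) (w : 'cV[F]_K) : server_data Z :=
  [ffun k => w (val k) 0].

Definition pW (w : 'cV[F]_K) : R := \prod_(k < K) (#|F|%:R)^-1.

Definition pX (Z : {set 'I_K}) (x : server_data Z) : R :=
  \sum_(w : 'cV[F]_K | restrict Z w == x) pW w.

(* Union characteristic graph of server i, when the servers in S transmit:
   x1, x2 adjacent iff for some realization of the other transmitting
   servers' data, jointly of positive probability with both x1 and x2,
   some demanded function Gamma W differs. *)
Definition char_adj (Gamma : 'M[F]_(Kc, K)) (S : {set 'I_N}) (i : 'I_N) :
    rel (server_data (cyclic_Z i)) :=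
  fun x1 x2 =>
    (x1 != x2) &&
    [exists w1 : 'cV[F]_K, [exists w2 : 'cV[F]_K,
      [&& restrict (cyclic_Z i) w1 == x1, restrict (cyclic_Z i) w2 == x2,
          0 < pW w1, 0 < pW w2,
          [forall j in S, (j != i) ==>
             [forall k in cyclic_Z j, w1 k 0 == w2 k 0]] &
          Gamma *m w1 != Gamma *m w2]]].

(* Rate of server i in q-ary symbols: graph entropy / ln q. *)
Definition server_rate (Gamma : 'M[F]_(Kc, K)) (S : {set 'I_N}) (i : 'I_N) : R :=
  graph_entropy (@char_adj Gamma S i) (fun x : server_data (cyclic_Z i) => pX x) / ln (#|F|%:R : R).

Definition R_ach (Gamma : 'M[F]_(Kc, K)) (S : {set 'I_N}) : R :=
  \sum_(i in S) server_rate Gamma S i.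

End Model.

From Pilot Require Import Defs.
From HB Require Import structures.
From mathcomp Require Import all_boot all_order all_algebra.
From mathcomp Require Import all_classical all_reals all_analysis.
(* Re-imported so that the finset lemmas shadow their classical_sets homonyms. *)
From mathcomp Require Import fintype finset.
From mathcomp Require Import ring lra zify.
Import Order.TTheory GRing.Theory Num.Theory.
Local Open Scope ring_scope.
Set Implicit Arguments. Unset Strict Implicit. Unset Printing Implicit Defensive.

(* A proper colouring [g] of a characteristic graph by a set [C] bounds its graph
   entropy by [ln #|C|]: sending [x] to a fixed maximal independent set containing
   the colour class of [x] is an admissible test channel, and its mutual information
   is at most the entropy of [g X], hence at most [ln #|C|].
   Server [i] colours its data by their restriction to the datasets that no other
   transmitting server stores, either verbatim ([q ^ #|E_i|] colours) or through
   [Gamma] ([q ^ Kc] colours): adjacent realizations agree, in every jointly possible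
   realization, on the datasets stored elsewhere, so [Gamma] separates them on [E_i].
   Any [Nr] servers of the cyclic placement store every dataset, and for [Nr >= 2]
   the datasets exclusive to one server lie in a single residue class mod [N], so
   [#|E_i| <= Delta]; summing [minn Kc #|E_i|] over the [Nr] servers gives the bound. *)

Lemma ln_le_subr1 (R : realType) (x : R) : 0 < x -> ln x <= x - 1.
Proof.
move=> x_gt0; have := @le_ln1Dx R (x - 1); rewrite addrCA subrr addr0; apply; lra.
Qed.

(* [inf E] is [0] when [E] has no lower bound. *)
Lemma inf_le_ge0 (R : realType) (E : set R) (x : R) : E x -> 0 <= x -> inf E <= x.
Proof.
move=> Ex x_ge0; have [lbE|nlbE] := pselect (has_lbound E); first exact: ge_inf Ex.
by rewrite inf_out // => -[].
Qed.

Section MaximalIndependent.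
Variables (V : finType) (adj : rel V).

Definition max_independent_ext (A : {set V}) : {set V} :=
  [arg max_(B > A | independent adj B && (A \subset B)) #|B|].

Lemma max_independent_extP A : independent adj A ->
  max_independent adj (max_independent_ext A) /\ A \subset max_independent_ext A.
Proof.
move=> indA; rewrite /max_independent_ext.
case: arg_maxnP => [|B /andP[indB sAB] maxB]; first by rewrite indA subxx.
split=> //; rewrite /max_independent indB /=.
apply/forallP => B'; apply/implyP => ltBB'; apply/negP => indB'.
have := maxB B'; rewrite indB' (subset_trans sAB (proper_sub ltBB')) => /(_ isT).
by move: (proper_card ltBB'); rewrite ltnNge => /negP.
Qed.

Lemma independent_coloring_class (C : eqType) (g : V -> C) c :
  (forall x y, adj x y -> g x != g y) -> independent adj [set x | g x == c].
Proof.
move=> g_proper; apply/forallP => x; apply/implyP; rewrite inE => /eqP gx.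
apply/forallP => y; apply/implyP; rewrite inE => /eqP gy.
by apply/negP => /g_proper; rewrite gx gy eqxx.
Qed.

End MaximalIndependent.

Section DeterministicChannel.
Variables (R : realType) (V : finType) (p : V -> R) (f : V -> {set V}).

Definition det_channel (x : V) (A : {set V}) : R := (A == f x)%:R.

Lemma det_channel_valid adj :
  (forall x, max_independent adj (f x) /\ x \in f x) ->
  valid_test_channel adj p det_channel.
Proof.
move=> f_max; split=> [x A|x|x A _].
- by rewrite ler0n.
- rewrite (bigD1 (f x)) //= big1 ?addr0 /det_channel ?eqxx // => A.
  by move/negbTE ->.
- by rewrite /det_channel; case: eqP => [-> _|]; rewrite ?ltxx.
Qed.

Lemma mutual_info_det_channel :
  mutual_info p det_channel = \sum_x p x * ln (\sum_(y | f y == f x) p y)^-1.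
Proof.
apply: eq_bigr => x _; rewrite (bigD1 (f x)) //= [X in _ + X]big1; last first.
  by move=> A /negbTE nA; rewrite /det_channel nA mulr0 eqxx.
have -> : \sum_y p y * det_channel y (f x) = \sum_(y | f y == f x) p y.
  rewrite [RHS]big_mkcond /=; apply: eq_bigr => y _.
  by rewrite /det_channel eq_sym; case: eqP; rewrite ?mulr1 ?mulr0.
rewrite addr0 /det_channel eqxx mulr1 div1r.
by case: eqP => [->|]; rewrite ?mul0r.
Qed.

End DeterministicChannel.

Section FiberEntropy.
Variables (R : realType) (V : finType) (p : V -> R).
Hypotheses (p_gt0 : forall x, 0 < p x) (p_sum1 : \sum_x p x = 1).

Definition fiber_mass (T : eqType) (h : V -> T) (x : V) : R :=
  \sum_(y | h y == h x) p y.

Definition fiber_entropy (T : eqType) (h : V -> T) : R :=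
  \sum_x p x * ln (fiber_mass h x)^-1.

Lemma fiber_mass_ge (T : eqType) (h : V -> T) x : p x <= fiber_mass h x.
Proof.
rewrite /fiber_mass (bigD1 x) //= lerDl.
by apply: sumr_ge0 => y _; apply: ltW.
Qed.

Lemma fiber_mass_gt0 (T : eqType) (h : V -> T) x : 0 < fiber_mass h x.
Proof. exact: lt_le_trans (p_gt0 x) (fiber_mass_ge h x). Qed.

Lemma fiber_mass_le1 (T : eqType) (h : V -> T) x : fiber_mass h x <= 1.
Proof.
rewrite -p_sum1 [leRHS](bigID (fun y => h y == h x)) /= lerDl.
by apply: sumr_ge0 => y _; apply: ltW.
Qed.

Lemma fiber_mass_le_coarser (T T' : eqType) (g : V -> T) (h : V -> T') x :
  (forall y z, g y = g z -> h y = h z) -> fiber_mass g x <= fiber_mass h x.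
Proof.
move=> h_factors; rewrite /fiber_mass [leLHS]big_mkcond [leRHS]big_mkcond.
apply: ler_sum => y _; case: eqP => [/h_factors ->|_]; first by rewrite eqxx.
by case: ifP => // _; apply: ltW.
Qed.

Lemma fiber_entropy_ge0 (T : eqType) (h : V -> T) : 0 <= fiber_entropy h.
Proof.
apply: sumr_ge0 => x _; apply: mulr_ge0; first exact: ltW.
by rewrite lnV ?posrE ?fiber_mass_gt0 // oppr_ge0 ln_le0 ?fiber_mass_le1.
Qed.

Lemma fiber_entropy_le_coarser (T T' : eqType) (g : V -> T) (h : V -> T') :
  (forall y z, g y = g z -> h y = h z) -> fiber_entropy h <= fiber_entropy g.
Proof.
move=> h_factors; apply: ler_sum => x _; apply: ler_wpM2l; first exact: ltW.
rewrite !lnV ?posrE ?fiber_mass_gt0 // lerN2 ler_ln ?posrE ?fiber_mass_gt0 //.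
exact: fiber_mass_le_coarser.
Qed.

Lemma sum_div_fiber_mass (C : finType) (g : V -> C) :
  \sum_x p x / fiber_mass g x <= #|C|%:R.
Proof.
rewrite (partition_big g predT) //= -[leRHS]sumr_const; apply: ler_sum => c _.
rewrite (eq_bigr (fun x => p x / \sum_(y | g y == c) p y)) => [|x /eqP gx]; last first.
  by rewrite /fiber_mass gx.
rewrite -mulr_suml; have [->|nz] := eqVneq (\sum_(x | g x == c) p x) 0.
  by rewrite mul0r ler01.
by rewrite mulfV.
Qed.

Lemma fiber_entropy_le_ln_card (C : finType) (g : V -> C) :
  fiber_entropy g <= ln #|C|%:R.
Proof.
have [x0 _] : exists x0 : V, true.
  case: (pickP (@predT V)) => [x0|V0]; first by exists x0.
  by move: p_sum1; rewrite big_pred0 // => /esym/eqP; rewrite oner_eq0.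
have n_gt0 : (0 : R) < #|C|%:R by rewrite ltr0n; apply/card_gt0P; exists (g x0).
set n : R := #|C|%:R in n_gt0 *.
have ln_inv_mass_le x : ln (fiber_mass g x)^-1 <= ln n + ((n * fiber_mass g x)^-1 - 1).
  have Q_gt0 := fiber_mass_gt0 g x.
  have -> : ln (fiber_mass g x)^-1 = ln n + ln (n * fiber_mass g x)^-1.
    by rewrite invfM lnM ?posrE ?invr_gt0 // !lnV ?posrE //; lra.
  by rewrite lerD2l ln_le_subr1 // invr_gt0 mulr_gt0.
apply: (@le_trans _ _ (\sum_x p x * (ln n + ((n * fiber_mass g x)^-1 - 1)))).
  by apply: ler_sum => x _; apply: ler_wpM2l (ln_inv_mass_le x); apply: ltW.
have expand x : p x * (ln n + ((n * fiber_mass g x)^-1 - 1)) =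
    p x * ln n + (n^-1 * (p x / fiber_mass g x) - p x).
  by rewrite invfM; ring.
rewrite (eq_bigr _ (fun x _ => expand x)) big_split sumrB /= -mulr_suml -mulr_sumr.
rewrite p_sum1 mul1r gerDl subr_le0 mulrC ler_pdivrMr // mul1r.
exact: sum_div_fiber_mass.
Qed.

End FiberEntropy.

Theorem graph_entropy_le_ln_coloring (R : realType) (V C : finType) (adj : rel V)
    (p : V -> R) (g : V -> C) :
  (forall x, 0 < p x) -> \sum_x p x = 1 ->
  (forall x y, adj x y -> g x != g y) -> graph_entropy adj p <= ln #|C|%:R.
Proof.
move=> p_gt0 p_sum1 g_proper.
pose f x := max_independent_ext adj [set y | g y == g x].
have f_max x : max_independent adj (f x) /\ x \in f x.
  have [maxf sub_f] := max_independent_extP (independent_coloring_class (g x) g_proper).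
  by split=> //; apply: (subsetP sub_f); rewrite inE.
apply: le_trans (fiber_entropy_le_ln_card p_gt0 p_sum1 g).
have f_factors y z : g y = g z -> f y = f z by rewrite /f => ->.
apply: le_trans (fiber_entropy_le_coarser p_gt0 f_factors).
apply: inf_le_ge0; last exact: fiber_entropy_ge0.
exists (det_channel R f); split; first exact: det_channel_valid.
by rewrite mutual_info_det_channel.
Qed.

Section SetCardinality.
Variable T : finType.
Local Open Scope nat_scope.

Lemma cards_add_leq (A B : {set T}) : #|A| + #|B| <= #|T| + #|A :&: B|.
Proof. by rewrite -cardsUI leq_add2r max_card. Qed.

Lemma minn_card_lt_setU (A B : {set T}) :
  A != B -> minn #|A| #|B| < #|A :|: B|.
Proof.
move=> neqAB; have [sAB|nsAB] := boolP (A \subset B).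
  rewrite (setUidPr sAB); apply: leq_ltn_trans (geq_minl _ _) _.
  by apply: proper_card; rewrite properEneq neqAB.
apply: leq_ltn_trans (geq_minr _ _) _; apply: proper_card.
rewrite properEneq subsetUr andbT.
by apply: contra nsAB => /eqP ->; apply: subsetUl.
Qed.

End SetCardinality.

Section CyclicPlacement.
Local Open Scope nat_scope.
Variables (N Nr Delta : nat).
Hypothesis N_gt0 : 0 < N.
Local Notation K := (Delta * N).

(* [cdist p j] is (p - j) mod N; server [j] stores the datasets of residue [p]
   iff [cdist p j <= N - Nr]. *)
Definition cdist (p j : nat) : nat := (p + N - j) %% N.

Lemma cdist_ltn p j : cdist p j < N.
Proof. exact: ltn_pmod. Qed.

Lemma cdistP p j : p < N -> j < N ->
  (j <= p /\ cdist p j = p - j) \/ (p < j /\ cdist p j = p + N - j).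
Proof.
move=> pN jN; rewrite /cdist; case: leqP => jp; [left | right]; split=> //.
  by rewrite -addnBAC // modnDr modn_small // ltn_subLR; lia.
by rewrite modn_small //; lia.
Qed.

Lemma cdistK p t : p < N -> t < N -> cdist p (cdist p t) = t.
Proof.
move=> pN tN; have := cdistP pN (cdist_ltn p t); have := cdistP pN tN; lia.
Qed.

Definition window (p : nat) : {set 'I_N} := [set j : 'I_N | cdist p j <= N - Nr].

Lemma mem_cyclic_Z (k : 'I_K) (j : 'I_N) :
  (k \in cyclic_Z Nr Delta j) = (j \in window (k %% N)).
Proof.
by rewrite !inE /cdist -!addnBA ?(ltnW (ltn_ord j)) // modnDml.
Qed.

Lemma card_window p : 0 < Nr -> p < N -> (N - Nr).+1 <= #|window p|.
Proof.
move=> Nr_gt0 pN; pose f (t : 'I_(N - Nr).+1) : 'I_N := Ordinal (cdist_ltn p t).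
have tN (t : 'I_(N - Nr).+1) : t < N by have := ltn_ord t; lia.
have f_inj : injective f.
  by move=> t1 t2 /(congr1 (cdist p \o val)) /=; rewrite !cdistK // => /val_inj.
rewrite -[leqLHS]card_ord -cardsT -(card_imset _ f_inj); apply: subset_leq_card.
apply/subsetP => _ /imsetP[t _ ->]; rewrite inE /= cdistK //.
by have := ltn_ord t; lia.
Qed.

(* As [Nr >= 2], windows are proper cyclic intervals: the successor of [p'] lies in
   [window p] whenever [p'] does, but never in [window p']. *)
Lemma window_neq p p' :
  2 <= Nr -> p < N -> p' < N -> p != p' -> window p != window p'.
Proof.
move=> Nr2 pN p'N /eqP neq_pp'; apply/negP => /eqP same.
have p'_in : cdist p p' <= N - Nr.
  by move/setP/(_ (Ordinal p'N)): same; rewrite !inE /cdist /= addKn modnn => ->.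
have [q q_spec] : exists q : 'I_N,
    (p'.+1 < N /\ q = p'.+1 :> nat) \/ (p'.+1 = N /\ q = 0 :> nat).
  case: (ltnP p'.+1 N) => h; first by exists (Ordinal h); left.
  by exists (Ordinal N_gt0); right; split=> //; lia.
have q_in : q \in window p.
  by rewrite inE; have := cdistP pN (ltn_ord q); have := cdistP pN p'N; lia.
have q_out : q \notin window p'.
  by rewrite inE -ltnNge; have := cdistP p'N (ltn_ord q); lia.
by move: q_in q_out; rewrite same => ->.
Qed.

Variable S : {set 'I_N}.
Hypotheses (Nr_gt0 : 0 < Nr) (card_S : #|S| = Nr).

Lemma cyclic_cover (k : 'I_K) : exists2 j, j \in S & k \in cyclic_Z Nr Delta j.
Proof.
have : 0 < #|S :&: window (k %% N)|.
  have := cards_add_leq S (window (k %% N)).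
  have := card_window Nr_gt0 (ltn_pmod k N_gt0).
  by rewrite card_ord card_S; lia.
by case/card_gt0P => j; rewrite inE => /andP[jS jw]; exists j; rewrite ?mem_cyclic_Z.
Qed.

Definition exclusive (i : 'I_N) : {set 'I_K} :=
  [set k in cyclic_Z Nr Delta i |
     [forall j in S, (j != i) ==> (k \notin cyclic_Z Nr Delta j)]].

Lemma not_exclusive_stored i k : k \notin exclusive i ->
  exists2 j, j \in S & (j != i) && (k \in cyclic_Z Nr Delta j).
Proof.
rewrite inE negb_and => /orP[kNi | /forallPn[j]].
  have [j jS kj] := cyclic_cover k; exists j; rewrite ?kj ?andbT //.
  by apply: contraNneq kNi => <-.
by rewrite negb_imply negb_imply negbK => /andP[jS /andP[ji kj]]; exists j; rewrite ?ji.
Qed.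

Lemma exclusive_window i k : k \in exclusive i -> S :&: window (k %% N) \subset [set i].
Proof.
rewrite inE => /andP[_ /forallP excl]; apply/subsetP => j.
rewrite in_setI in_set1 => /andP[jS jw]; apply/negPn/negP => ji.
by have := excl j; rewrite jS ji /= mem_cyclic_Z jw.
Qed.

Lemma card_exclusive i : 2 <= Nr -> #|exclusive i| <= Delta.
Proof.
move=> Nr2; have blk (k : 'I_K) : k %/ N < Delta by rewrite ltn_divLR.
rewrite -[leqRHS]card_ord; apply: (@leq_card_in _ _ (fun k : 'I_K => Ordinal (blk k))).
move=> k1 k2 k1E k2E /(congr1 val) /= same_blk; apply: val_inj => /=.
rewrite (divn_eq k1 N) (divn_eq k2 N) same_blk; congr (_ + _).
apply/eqP; apply: contraT => neq.
have := minn_card_lt_setU (window_neq Nr2 (ltn_pmod k1 N_gt0) (ltn_pmod k2 N_gt0) neq).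
have := card_window Nr_gt0 (ltn_pmod k1 N_gt0).
have := card_window Nr_gt0 (ltn_pmod k2 N_gt0).
set U := window (k1 %% N) :|: window (k2 %% N).
have : #|S :&: U| <= 1.
  by rewrite -(cards1 i) subset_leq_card // setIUr subUset !exclusive_window.
have := cards_add_leq S U; have := max_card S.
by rewrite !card_ord card_S; lia.
Qed.

End CyclicPlacement.

Section ServerData.
Variables (R : realType) (F : finFieldType) (N Delta : nat) (Z : {set 'I_(Delta * N)}).
Local Notation K := (Delta * N).

Definition extend (x : server_data F Z) : 'cV[F]_K := \col_k oapp x 0 (insub k).

Lemma restrict_extend x : Defs.restrict Z (extend x) = x.
Proof. by apply/ffunP => k; rewrite ffunE mxE valK. Qed.

Lemma pW_gt0 (w : 'cV[F]_K) : 0 < pW R w.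
Proof.
apply: prodr_gt0 => k _; rewrite invr_gt0 ltr0n; exact: ltnW (card_finNzRing_gt1 F).
Qed.

Lemma pX_gt0 (x : server_data F Z) : 0 < pX R x.
Proof.
rewrite /pX (bigD1 (extend x)) /= ?restrict_extend //.
by rewrite ltr_pwDl ?pW_gt0 // sumr_ge0 // => w _; apply/ltW/pW_gt0.
Qed.

Lemma sum_pX : \sum_(x : server_data F Z) pX R x = 1.
Proof.
have total : \sum_(w : 'cV[F]_K) pW R w = 1.
  rewrite /pW sumr_const card_mx muln1 prodr_const card_ord -[LHS]mulr_natr natrX.
  rewrite -exprMn mulVf ?expr1n // pnatr_eq0 -lt0n.
  exact: ltnW (card_finNzRing_gt1 F).
by rewrite (partition_big (Defs.restrict Z) predT) in total.
Qed.

End ServerData.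

Section TransmittingServer.
Variables (R : realType) (F : finFieldType) (N Kc Nr Delta : nat)
  (Gamma : 'M[F]_(Kc, Delta * N)) (S : {set 'I_N}) (i : 'I_N).
Hypotheses (N_gt0 : (0 < N)%N) (Nr_gt0 : (0 < Nr)%N) (card_S : #|S| = Nr).
Local Notation K := (Delta * N).
Local Notation Z := (cyclic_Z Nr Delta i).
Local Notation E := (exclusive Nr Delta S i).

Definition exclusive_part (x : server_data F Z) : 'cV[F]_K :=
  \col_k (if k \in E then extend x k 0 else 0).

(* Outside E every dataset is also stored by another transmitting server, on whose
   data realizations of positive joint probability agree; so w1 - w2 lives on E. *)
Lemma char_adj_exclusive_part x1 x2 : char_adj R Gamma S x1 x2 ->
  Gamma *m exclusive_part x1 != Gamma *m exclusive_part x2.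
Proof.
case/andP=> _ /existsP[w1 /existsP[w2 /and5P[/eqP r1 /eqP r2 _ _ /andP[agree]]]].
apply: contra => /eqP same_image.
have diff_on_E : w1 - w2 = exclusive_part x1 - exclusive_part x2.
  apply/matrixP => k j; rewrite ord1 !mxE.
  case: (boolP (k \in E)) => kE.
    have kZ : k \in Z by move: kE; rewrite inE => /andP[].
    by rewrite -r1 -r2 (insubT (mem Z) kZ) /= !ffunE.
  have [j' j'S /andP[j'i kj']] := not_exclusive_stored N_gt0 Nr_gt0 card_S kE.
  move/forallP/(_ j'): agree; rewrite j'S j'i /= => /forallP/(_ k).
  by rewrite kj' => /eqP ->; rewrite !subrr.
by rewrite -subr_eq0 -mulmxBr diff_on_E mulmxBr same_image subrr.
Qed.

Lemma server_rate_le_coloring (C : finType) (g : server_data F Z -> C) m :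
  #|C| = (#|F| ^ m)%N -> (forall x y, char_adj R Gamma S x y -> g x != g y) ->
  server_rate R Nr Gamma S i <= m%:R.
Proof.
move=> card_C g_proper.
have q_gt1 : (1 : R) < #|F|%:R by rewrite ltr1n card_finNzRing_gt1.
rewrite /server_rate ler_pdivrMr ?ln_gt0 //.
have := graph_entropy_le_ln_coloring (@pX_gt0 R F N Delta Z) (sum_pX R F Z) g_proper.
move/le_trans; apply.
by rewrite card_C natrX lnXn ?(lt_trans ltr01 q_gt1) // mulr_natl.
Qed.

Lemma server_rate_le_Kc : server_rate R Nr Gamma S i <= Kc%:R.
Proof.
apply: (server_rate_le_coloring (g := fun x => Gamma *m exclusive_part x)).
  by rewrite card_mx muln1.
exact: char_adj_exclusive_part.
Qed.

Lemma server_rate_le_card_exclusive : server_rate R Nr Gamma S i <= #|E|%:R.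
Proof.
pose g (x : server_data F Z) : {ffun {k | k \in E} -> F} :=
  [ffun k => exclusive_part x (val k) 0].
apply: (server_rate_le_coloring (g := g)); first by rewrite card_ffun card_sig.
move=> x y /char_adj_exclusive_part; apply: contra => /eqP same_g.
apply/eqP; congr (_ *m _); apply/matrixP => k j; rewrite ord1.
case: (boolP (k \in E)) => kE; last by rewrite !mxE (negbTE kE).
by move/ffunP/(_ (Sub k kE)): same_g; rewrite !ffunE.
Qed.

Lemma server_rate_le_minn : server_rate R Nr Gamma S i <= (minn Kc #|E|)%:R.
Proof.
rewrite /minn; case: ifP => _; first exact: server_rate_le_Kc.
exact: server_rate_le_card_exclusive.
Qed.

End TransmittingServer.

Lemma leq_total_rate_bound (N Kc Nr Delta : nat) : (1 <= Nr <= N)%N ->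
  (Nr * (if 2 <= Nr then minn Kc Delta else minn Kc (Delta * N)) <=
   (if Kc <= Delta * Nr then minn Kc Delta * Nr else minn Kc (Delta * N)))%N.
Proof.
case/andP=> Nr_gt0 Nr_leN.
have DNr_le_DN : (Delta * Nr <= Delta * N)%N by rewrite leq_mul2l Nr_leN orbT.
case: (ltnP 1 Nr) => [Nr2 | Nr_le1].
  case: (leqP Kc (Delta * Nr)) => [_|DNr_lt_Kc]; first by rewrite mulnC.
  have D_lt_Kc : (Delta < Kc)%N.
    by apply: leq_ltn_trans DNr_lt_Kc; rewrite leq_pmulr.
  by rewrite (minn_idPr (ltnW D_lt_Kc)) mulnC leq_min (ltnW DNr_lt_Kc).
have Nr1 : Nr = 1%N by apply/anti_leq/andP.
by rewrite Nr1 /= in DNr_le_DN *; case: (leqP Kc (Delta * 1)); lia.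
Qed.

Theorem proposition1 (R : realType) (F : finFieldType) (N Kc Nr Delta : nat)
    (Gamma : 'M[F]_(Kc, Delta * N)) (S : {set 'I_N}) :
  (0 < Delta)%N -> (1 <= Nr <= N)%N -> (1 <= Kc)%N -> #|S| = Nr ->
  R_ach R Nr Gamma S <=
    (if (Kc <= Delta * Nr)%N then ((minn Kc Delta) * Nr)%:R
     else (minn Kc (Delta * N))%:R).
Proof.
move=> _ Nr_range _ card_S; have /andP[Nr_gt0 Nr_leN] := Nr_range.
have N_gt0 : (0 < N)%N := leq_trans Nr_gt0 Nr_leN.
pose b := if (2 <= Nr)%N then minn Kc Delta else minn Kc (Delta * N).
have rate_le_b i : server_rate R Nr Gamma S i <= b%:R.
  apply: le_trans (server_rate_le_minn R Gamma i N_gt0 Nr_gt0 card_S) _.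
  have := max_card (exclusive Nr Delta S i); rewrite card_ord ler_nat /b.
  by case: ifP => [/(card_exclusive Delta N_gt0 Nr_gt0 card_S i)|_]; lia.
apply: le_trans (ler_sum _ (fun i _ => rate_le_b i)) _.
have := leq_total_rate_bound Kc Delta Nr_range.
rewrite sumr_const card_S -mulrnA mulnC.
by case: (leqP Kc (Delta * Nr)); rewrite ler_nat.
Qed.
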